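(* Weak-head reduction $\to_{wh}$ on $\mathtt T_J$ is deterministic: if $t\to_{wh} t_1$ and $t\to_{wh} t_2$ then $t_1=t_2$.
   Context: Terms $\mathtt T_J$: $t,u,r ::= x \mid \lambda x.t \mid t(u,y.r)$ ($y$ bound in $r$), up to $\alpha$-equivalence; $\{u/x\}t$ is capture-avoiding substitution. Neutral terms $\mathtt n ::= x \mid \mathtt n(u,y.\mathtt n)$; neutral list contexts $\mathtt D_n ::= \Diamond \mid \mathtt n(u,y.\mathtt D_n)$; weak-head contexts $\mathtt W ::= \Diamond \mid \mathtt W(u,y.r) \mid \mathtt n(u,y.\mathtt W)$ (here $u,r$ arbitrary terms). Weak-head reduction: $\mathtt W\langle \mathtt D_n\langle\lambda x.s\rangle(u,y.r)\rangle \to_{wh} \mathtt W\langle \{\{u/x\}\mathtt D_n\langle s\rangle/y\}r\rangle$ (by $\alpha$-conversion, variables bound by $\mathtt D_n$ not free in $u$, and $x$ not occurring in $\mathtt D_n$). *)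

(* Terms of T_J up to alpha-equivalence, represented with
   de Bruijn indices. *)
From Stdlib Require Import Arith.

(* t, u, r ::= x | \x.t | t(u, y.r)   (y bound in r) *)
Inductive term : Type :=
| Var : nat -> term
| Lam : term -> term
| App : term -> term -> term -> term.  (* App t u r : r binds index 0 (= y) *)

Fixpoint shift (d c : nat) (t : term) : term :=
  match t with
  | Var n => if Nat.leb c n then Var (n + d) else Var n
  | Lam b => Lam (shift d (S c) b)
  | App t1 u r => App (shift d c t1) (shift d c u) (shift d (S c) r)
  end.

Fixpoint subst (k : nat) (u : term) (t : term) : term :=
  match t with
  | Var n => if Nat.ltb n k then Var n
             else if Nat.eqb n k then shift k 0 u
             else Var (pred n)
  | Lam b => Lam (subst (S k) u b)
  | App t1 u' r => App (subst k u t1) (subst k u u') (subst (S k) u r)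
  end.

(* {u/x} t where x is the variable bound by the outermost removed binder *)
Definition subst0 (u t : term) : term := subst 0 u t.

Inductive neutral : term -> Prop :=
| neutral_var : forall x, neutral (Var x)
| neutral_app : forall n u n', neutral n -> neutral n' -> neutral (App n u n').

Inductive Dctx : Type :=
| DHole : Dctx
| DApp : term -> term -> Dctx -> Dctx.

Fixpoint Dvalid (D : Dctx) : Prop :=
  match D with
  | DHole => True
  | DApp n _ D' => neutral n /\ Dvalid D'
  end.

Fixpoint plugD (D : Dctx) (t : term) : term :=
  match D with
  | DHole => t
  | DApp n u D' => App n u (plugD D' t)
  end.

(* number of binders of D crossed to reach the hole *)
Fixpoint depthD (D : Dctx) : nat :=
  match D with
  | DHole => 0
  | DApp _ _ D' => S (depthD D')
  end.

Inductive Wctx : Type :=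
| WHole : Wctx
| WLeft : Wctx -> term -> term -> Wctx
| WRight : term -> term -> Wctx -> Wctx.

Fixpoint Wvalid (W : Wctx) : Prop :=
  match W with
  | WHole => True
  | WLeft W' _ _ => Wvalid W'
  | WRight n _ W' => neutral n /\ Wvalid W'
  end.

Fixpoint plugW (W : Wctx) (t : term) : term :=
  match W with
  | WHole => t
  | WLeft W' u r => App (plugW W' t) u r
  | WRight n u W' => App n u (plugW W' t)
  end.

(* W<D<\x.s>(u,y.r)>  ->wh  W<{ {u/x} D<s> / y } r>.
   In de Bruijn form, s sits under the binders of D and then the lambda;
   {u/x} D<s> is D<s[0 := u shifted past the binders of D]>. *)
Definition wh_step (t t' : term) : Prop :=
  exists (W : Wctx) (D : Dctx) (s u r : term),
    Wvalid W /\ Dvalid D /\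
    t = plugW W (App (plugD D (Lam s)) u r) /\
    t' = plugW W (subst0 (plugD D (subst0 (shift (depthD D) 0 u) s)) r).

(* Neither a neutral term nor a list context D<\x.s> has the form W<R> with
   R a redex, because every head crossed by W or D is neutral. Hence a term
   splits in at most one way as W<R> with R a redex, and a redex
   D<\x.s>(u,y.r) determines D and s, so the reduct is determined. *)

Definition redex (t : term) : Prop :=
  exists D s u r, Dvalid D /\ t = App (plugD D (Lam s)) u r.

Lemma neutral_App_inv : forall n u n',
  neutral (App n u n') -> neutral n /\ neutral n'.
Proof. intros n u n' Hneu. inversion Hneu. auto. Qed.

Lemma plugD_Lam_not_neutral : forall D s, ~ neutral (plugD D (Lam s)).
Proof.
  induction D as [| n u D IHD]; simpl; intros s Hneu.
  - inversion Hneu.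
  - exact (IHD s (proj2 (neutral_App_inv _ _ _ Hneu))).
Qed.

Lemma redex_not_neutral : forall R, redex R -> ~ neutral R.
Proof.
  intros R [D [s [u [r [_ ->]]]]] Hneu.
  exact (plugD_Lam_not_neutral D s (proj1 (neutral_App_inv _ _ _ Hneu))).
Qed.

Lemma plugW_redex_not_neutral : forall W R,
  Wvalid W -> redex R -> ~ neutral (plugW W R).
Proof.
  induction W as [| W IHW u r | n u W IHW]; simpl; intros R HW HR Hneu.
  - exact (redex_not_neutral R HR Hneu).
  - exact (IHW R HW HR (proj1 (neutral_App_inv _ _ _ Hneu))).
  - exact (IHW R (proj2 HW) HR (proj2 (neutral_App_inv _ _ _ Hneu))).
Qed.

Lemma plugW_redex_neq_plugD_Lam : forall D s W R,
  Dvalid D -> Wvalid W -> redex R -> plugW W R <> plugD D (Lam s).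
Proof.
  induction D as [| n u D IHD]; intros s W R HD HW HR E;
    destruct W as [| W u' r' | n' u' W]; simpl in *; try discriminate.
  - destruct HR as [D' [s' [u' [r' [_ ->]]]]]. discriminate.
  - destruct HR as [D' [s' [u' [r' [_ ->]]]]]. injection E as <- _ _.
    exact (plugD_Lam_not_neutral D' s' (proj1 HD)).
  - injection E as <- _ _. exact (plugW_redex_not_neutral W R HW HR (proj1 HD)).
  - injection E as _ _ E. exact (IHD s W R (proj2 HD) (proj2 HW) HR E).
Qed.

Lemma plugW_redex_inj : forall W W' R R',
  Wvalid W -> Wvalid W' -> redex R -> redex R' ->
  plugW W R = plugW W' R' -> W = W' /\ R = R'.
Proof.
  induction W as [| W IHW u r | n u W IHW]; intros W' R R' HW HW' HR HR' E;
    destruct W' as [| W' u' r' | n' u' W']; simpl in *.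
  - auto.
  - exfalso. destruct HR as [D [s [u [r [HD ->]]]]]. injection E as E _ _.
    exact (plugW_redex_neq_plugD_Lam D s W' R' HD HW' HR' (eq_sym E)).
  - exfalso. destruct HR as [D [s [u [r [HD ->]]]]]. injection E as <- _ _.
    exact (plugD_Lam_not_neutral D s (proj1 HW')).
  - exfalso. destruct HR' as [D [s [u' [r' [HD ->]]]]]. injection E as E _ _.
    exact (plugW_redex_neq_plugD_Lam D s W R HD HW HR E).
  - injection E as E <- <-. destruct (IHW W' R R' HW HW' HR HR' E) as [-> ->].
    auto.
  - exfalso. injection E as <- _ _.
    exact (plugW_redex_not_neutral W R HW HR (proj1 HW')).
  - exfalso. destruct HR' as [D [s [u' [r' [HD ->]]]]]. injection E as -> _ _.
    exact (plugD_Lam_not_neutral D s (proj1 HW)).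
  - exfalso. injection E as -> _ _.
    exact (plugW_redex_not_neutral W' R' HW' HR' (proj1 HW)).
  - injection E as <- <- E.
    destruct (IHW W' R R' (proj2 HW) (proj2 HW') HR HR' E) as [-> ->]. auto.
Qed.

Lemma plugD_Lam_inj : forall D D' s s',
  plugD D (Lam s) = plugD D' (Lam s') -> D = D' /\ s = s'.
Proof.
  induction D as [| n u D IHD]; intros D' s s' E;
    destruct D' as [| n' u' D']; simpl in *; try discriminate.
  - injection E as ->. auto.
  - injection E as <- <- E. destruct (IHD D' s s' E) as [-> ->]. auto.
Qed.

Theorem mainTheorem4 : forall t t1 t2 : term,
  wh_step t t1 -> wh_step t t2 -> t1 = t2.
Proof.
  intros t t1 t2 [W [D [s [u [r [HW [HD [-> ->]]]]]]]]
    [W' [D' [s' [u' [r' [HW' [HD' [E ->]]]]]]]].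
  assert (HR : redex (App (plugD D (Lam s)) u r)) by (exists D, s, u, r; auto).
  assert (HR' : redex (App (plugD D' (Lam s')) u' r')) by (exists D', s', u', r'; auto).
  destruct (plugW_redex_inj W W' _ _ HW HW' HR HR' E) as [<- Eredex].
  injection Eredex as Ehead <- <-.
  destruct (plugD_Lam_inj D D' s s' Ehead) as [<- <-].
  reflexivity.
Qed.
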